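(* Let $D\ge1$ and $p\ge1$ be integers, let $h>0$, let $Q\subset\mathbb{R}^D$ and $R\subset\mathbb{R}^D$ be finite sets (query and reference points), and let $c_Q,c_R\in\mathbb{R}^D$. For multi-indices $\alpha<p$ define the far-field moments $$M_\alpha=\sum_{r\in R}\frac{1}{\alpha!}\left(\frac{r-c_R}{\sqrt{2h^2}}\right)^{\alpha},$$ and for multi-indices $\beta<p$ define the translated local moments $$L_\beta=\frac{(-1)^{|\beta|}}{\beta!}\sum_{\alpha<p}M_\alpha\,h_{\alpha+\beta}\!\left(\frac{c_Q-c_R}{\sqrt{2h^2}}\right).$$ For $q\in\mathbb{R}^D$ let $$\widetilde G(q)=\sum_{\beta<p}L_\beta\left(\frac{q-c_Q}{\sqrt{2h^2}}\right)^{\beta},\qquad G(q)=\sum_{r\in R}e^{-\|q-r\|^2/(2h^2)}.$$ Suppose there is $r_0$ with $0\le r_0<\tfrac12$ such that $\|q-c_Q\|_\infty<r_0h$ for all $q\in Q$ and $\|r-c_R\|_\infty<r_0h$ for all $r\in R$. Then for every $q\in Q$, $$\bigl|\widetilde G(q)-G(q)\bigr|\le\frac{|R|}{(1-2r_0)^{2D}}\sum_{k=0}^{D-1}\binom{D}{k}\bigl((1-(2r_0)^p)^2\bigr)^k\left(\frac{(2r_0)^p\,(2-(2r_0)^p)}{\sqrt{p!}}\right)^{D-k}.$$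
   Context: Hermite polynomials: $H_n(t)=(-1)^n e^{t^2}\frac{d^n}{dt^n}e^{-t^2}$ for $t\in\mathbb{R}$; Hermite functions: $h_n(t)=e^{-t^2}H_n(t)$. For a $D$-dimensional multi-index $\alpha=(\alpha[1],\dots,\alpha[D])$ of non-negative integers and $t\in\mathbb{R}^D$: $h_\alpha(t)=\prod_{d=1}^D h_{\alpha[d]}(t[d])$, $|\alpha|=\sum_d\alpha[d]$, $\alpha!=\prod_d\alpha[d]!$, $t^\alpha=\prod_d t[d]^{\alpha[d]}$, and $\alpha+\beta$ is componentwise addition. For an integer $p$, ''$\alpha<p$'' means $\alpha[d]<p$ for every $d$. $\|\cdot\|$ is the Euclidean norm, $\|\cdot\|_\infty$ the max norm, $|R|$ the number of points in $R$. *)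

From Stdlib Require Import Arith Factorial Reals Lra Lia List.
Import ListNotations.
Open Scope R_scope.

(* Points of R^D are lists of reals of length D; coordinate d is nth d x 0.
   Multi-indices are lists of nats of length D; alpha[d] = nth d alpha 0. *)

Definition sumL {A : Type} (l : list A) (f : A -> R) : R :=
  fold_right (fun a s => f a + s) 0 l.

Definition prodD (D : nat) (f : nat -> R) : R :=
  fold_right (fun d s => f d * s) 1 (seq 0 D).

Definition sumD (D : nat) (f : nat -> R) : R := sumL (seq 0 D) f.

Fixpoint mindices (D p : nat) : list (list nat) :=
  match D with
  | O => [ [] ]
  | S D' => flat_map (fun a => map (fun i => i :: a) (seq 0 p)) (mindices D' p)
  end.

Definition mfact (D : nat) (a : list nat) : R :=
  prodD D (fun d => INR (fact (nth d a 0%nat))).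

Definition mabs (D : nat) (a : list nat) : nat :=
  fold_right Nat.add 0%nat (map (fun d => nth d a 0%nat) (seq 0 D)).

Definition madd (D : nat) (a b : list nat) : list nat :=
  map (fun d => (nth d a 0%nat + nth d b 0%nat)%nat) (seq 0 D).

Definition mpow (D : nat) (t : list R) (a : list nat) : R :=
  prodD D (fun d => (nth d t 0) ^ (nth d a 0%nat)).

Definition vscale (D : nat) (x c : list R) (s : R) : list R :=
  map (fun d => (nth d x 0 - nth d c 0) / s) (seq 0 D).

Definition dist2 (D : nat) (x y : list R) : R :=
  sumD D (fun d => (nth d x 0 - nth d y 0) ^ 2).

Inductive nth_deriv : nat -> (R -> R) -> (R -> R) -> Prop :=
| nth_deriv_0 : forall f, nth_deriv 0 f f
| nth_deriv_S : forall n f f' g,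
    (forall t, derivable_pt_lim f t (f' t)) ->
    nth_deriv n f' g -> nth_deriv (S n) f g.

(* hf is the family of Hermite functions h_n(t) = e^{-t^2} H_n(t)
   = (-1)^n d^n/dt^n e^{-t^2}, with H_n the (Rodrigues) Hermite polynomials. *)
Definition is_hermite_functions (hf : nat -> R -> R) : Prop :=
  forall n, nth_deriv n (fun t => exp (- t ^ 2)) (fun t => (-1) ^ n * hf n t).

Definition hmulti (hf : nat -> R -> R) (D : nat) (a : list nat) (t : list R) : R :=
  prodD D (fun d => hf (nth d a 0%nat) (nth d t 0)).

Definition farM (D : nat) (h : R) (Rs : list (list R)) (cR : list R) (a : list nat) : R :=
  sumL Rs (fun r => / mfact D a * mpow D (vscale D r cR (sqrt (2 * h ^ 2))) a).

Definition locL (hf : nat -> R -> R) (D p : nat) (h : R) (Rs : list (list R))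
    (cQ cR : list R) (b : list nat) : R :=
  (-1) ^ (mabs D b) / mfact D b *
  sumL (mindices D p) (fun a =>
    farM D h Rs cR a * hmulti hf D (madd D a b) (vscale D cQ cR (sqrt (2 * h ^ 2)))).

Definition Gtilde (hf : nat -> R -> R) (D p : nat) (h : R) (Rs : list (list R))
    (cQ cR : list R) (q : list R) : R :=
  sumL (mindices D p) (fun b =>
    locL hf D p h Rs cQ cR b * mpow D (vscale D q cQ (sqrt (2 * h ^ 2))) b).

Definition Gauss (D : nat) (h : R) (Rs : list (list R)) (q : list R) : R :=
  sumL Rs (fun r => exp (- dist2 D q r / (2 * h ^ 2))).

From Stdlib Require Import Arith Factorial Reals List Lra Lia Psatz FunctionalExtensionality.
Import ListNotations.
Open Scope R_scope.

(* Both sums factor over the reference points and, for each point, over the D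
   coordinates.  In the scaled coordinates u = (r - c_R)/s, c = (c_Q - c_R)/s,
   t = (q - c_Q)/s, s = sqrt(2 h^2), the coordinate factor of G is exp(-(c - u + t)^2),
   while that of G~ expands exp(-y^2) to order p twice: in -u around c, then in t.
   The bound h_n(y)^2 <= 4^n n! and the Lagrange remainder put each factor of G~ within
   B = rho^p (2 - rho^p) / (sqrt(p!) (1 - rho)^2) of the factor of G, rho = 2 r0, and the
   latter is at most 1 <= A = (1 - rho^p)^2 / (1 - rho)^2.  Telescoping over the
   coordinates bounds the difference of the products by (A + B)^D - A^D, and summing over
   R gives |R| ((A + B)^D - A^D), the right-hand side by the binomial theorem. *)

Lemma sumL_nil {A} (f : A -> R) : sumL [] f = 0.
Proof. reflexivity. Qed.

Lemma sumL_cons {A} (a : A) l f : sumL (a :: l) f = f a + sumL l f.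
Proof. reflexivity. Qed.

Lemma sumL_app {A} (l1 l2 : list A) f : sumL (l1 ++ l2) f = sumL l1 f + sumL l2 f.
Proof. induction l1; [simpl; ring|]. simpl app. rewrite !sumL_cons, IHl1. ring. Qed.

Lemma sumL_ext_in {A} (l : list A) f g :
  (forall x, In x l -> f x = g x) -> sumL l f = sumL l g.
Proof.
  induction l as [|a l IH]; intros H; [reflexivity|].
  rewrite !sumL_cons, H, IH; [reflexivity| |left; reflexivity].
  intros x Hx; apply H; right; exact Hx.
Qed.

Lemma sumL_ext {A} (l : list A) f g : (forall x, f x = g x) -> sumL l f = sumL l g.
Proof. intros; apply sumL_ext_in; auto. Qed.

Lemma sumL_scal_l {A} (l : list A) c f : c * sumL l f = sumL l (fun x => c * f x).
Proof. induction l; [unfold sumL; simpl; ring|]. rewrite !sumL_cons, <- IHl. ring. Qed.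

Lemma sumL_scal_r {A} (l : list A) c f : sumL l f * c = sumL l (fun x => f x * c).
Proof. induction l; [unfold sumL; simpl; ring|]. rewrite !sumL_cons, <- IHl. ring. Qed.

Lemma sumL_plus {A} (l : list A) f g : sumL l (fun x => f x + g x) = sumL l f + sumL l g.
Proof. induction l; [unfold sumL; simpl; ring|]. rewrite !sumL_cons, IHl. ring. Qed.

Lemma sumL_minus {A} (l : list A) f g : sumL l (fun x => f x - g x) = sumL l f - sumL l g.
Proof. induction l; [unfold sumL; simpl; ring|]. rewrite !sumL_cons, IHl. ring. Qed.

Lemma sumL_const {A} (l : list A) c : sumL l (fun _ => c) = INR (length l) * c.
Proof.
  induction l; [unfold sumL; simpl; ring|].
  rewrite sumL_cons, IHl, length_cons, S_INR. ring.
Qed.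

Lemma sumL_comm {A B} (l1 : list A) (l2 : list B) F :
  sumL l1 (fun a => sumL l2 (F a)) = sumL l2 (fun b => sumL l1 (fun a => F a b)).
Proof.
  induction l1 as [|a l1 IH].
  - rewrite sumL_nil, <- (Rmult_0_r (INR (length l2))), <- sumL_const. reflexivity.
  - rewrite sumL_cons, IH, <- sumL_plus. reflexivity.
Qed.

Lemma Rabs_sumL_le {A} (l : list A) f : Rabs (sumL l f) <= sumL l (fun x => Rabs (f x)).
Proof.
  induction l; [unfold sumL; simpl; rewrite Rabs_R0; lra|].
  rewrite !sumL_cons. eapply Rle_trans; [apply Rabs_triang|]. lra.
Qed.

Lemma sumL_le {A} (l : list A) f g : (forall x, In x l -> f x <= g x) -> sumL l f <= sumL l g.
Proof.
  induction l as [|a l IH]; intros H; [unfold sumL; simpl; lra|].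
  rewrite !sumL_cons. apply Rplus_le_compat; [apply H; left; reflexivity|].
  apply IH; intros x Hx; apply H; right; exact Hx.
Qed.

Lemma sumL_map {A B} (g : A -> B) l f : sumL (map g l) f = sumL l (fun x => f (g x)).
Proof. induction l; [reflexivity|]. simpl map. rewrite !sumL_cons, IHl; auto. Qed.

Lemma sumL_flat_map {A B} (g : A -> list B) l f :
  sumL (flat_map g l) f = sumL l (fun a => sumL (g a) f).
Proof. induction l; [reflexivity|]. simpl flat_map. rewrite sumL_app, sumL_cons, IHl; auto. Qed.

Lemma sumL_seq_S n f : sumL (seq 0 (S n)) f = sumL (seq 0 n) f + f n.
Proof. rewrite seq_S, sumL_app. unfold sumL at 2. simpl. ring. Qed.

Lemma sumL_seq_sum_f_R0 f n : sumL (seq 0 (S n)) f = sum_f_R0 f n.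
Proof. induction n; [unfold sumL; simpl; ring|]. rewrite sumL_seq_S, IHn. reflexivity. Qed.

Definition prodL (l : list nat) (f : nat -> R) : R := fold_right (fun d s => f d * s) 1 l.

Lemma prodL_cons a l f : prodL (a :: l) f = f a * prodL l f.
Proof. reflexivity. Qed.

Lemma prodL_ext_in l f g : (forall x, In x l -> f x = g x) -> prodL l f = prodL l g.
Proof.
  induction l as [|a l IH]; intros H; [reflexivity|].
  rewrite !prodL_cons, H, IH; [reflexivity| |left; reflexivity].
  intros x Hx; apply H; right; exact Hx.
Qed.

Lemma prodL_mult l f g : prodL l f * prodL l g = prodL l (fun d => f d * g d).
Proof. induction l; [unfold prodL; simpl; ring|]. rewrite !prodL_cons, <- IHl. ring. Qed.

Lemma prodL_inv l f : / prodL l f = prodL l (fun d => / f d).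
Proof. induction l; [apply Rinv_1|]. rewrite !prodL_cons, <- IHl, Rinv_mult. reflexivity. Qed.

Lemma prodL_map_S l f : prodL (map S l) f = prodL l (fun d => f (S d)).
Proof. induction l; [reflexivity|]. simpl map. rewrite !prodL_cons, IHl. reflexivity. Qed.

Lemma pow_sum_prodL x l (f : nat -> nat) :
  x ^ fold_right Nat.add 0%nat (map f l) = prodL l (fun d => x ^ f d).
Proof. induction l; [reflexivity|]. simpl. rewrite pow_add, IHl. reflexivity. Qed.

Lemma exp_sumL l f : exp (sumL l f) = prodL l (fun d => exp (f d)).
Proof.
  induction l; [apply exp_0|].
  rewrite sumL_cons, prodL_cons, <- IHl. apply exp_plus.
Qed.

Lemma prodD_S D f : prodD (S D) f = f 0%nat * prodD D (fun d => f (S d)).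
Proof.
  unfold prodD. change (seq 0 (S D)) with (0%nat :: seq 1 D). simpl fold_right.
  rewrite <- seq_shift. exact (f_equal _ (prodL_map_S (seq 0 D) f)).
Qed.

Lemma Rabs_prodL_le l f A :
  0 <= A -> (forall d, In d l -> Rabs (f d) <= A) -> Rabs (prodL l f) <= A ^ length l.
Proof.
  intros HA; induction l as [|a l IH]; intro H.
  - unfold prodL; simpl. rewrite Rabs_R1; lra.
  - rewrite prodL_cons, Rabs_mult, length_cons. simpl pow.
    apply Rmult_le_compat; try apply Rabs_pos; [apply H; left; reflexivity|].
    apply IH; intros x Hx; apply H; right; exact Hx.
Qed.

Lemma Rabs_prodL_sub_le l T E A B :
  0 <= A -> (forall d, In d l -> Rabs (E d) <= A /\ Rabs (T d - E d) <= B) ->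
  Rabs (prodL l T - prodL l E) <= (A + B) ^ length l - A ^ length l.
Proof.
  intros HA; induction l as [|a l IH]; intro H.
  - unfold prodL; simpl. rewrite Rminus_diag, Rabs_R0. lra.
  - rewrite !prodL_cons, length_cons. simpl pow.
    destruct (H a (or_introl eq_refl)) as [HEa HTa].
    assert (IHl := IH (fun d Hd => H d (or_intror Hd))).
    assert (HEl := Rabs_prodL_le l E A HA (fun d Hd => proj1 (H d (or_intror Hd)))).
    assert (HB : 0 <= B) by (eapply Rle_trans; [apply Rabs_pos|apply HTa]).
    assert (HT : Rabs (T a) <= A + B).
    { replace (T a) with (E a + (T a - E a)) by ring.
      eapply Rle_trans; [apply Rabs_triang|]. lra. }
    replace (T a * prodL l T - E a * prodL l E)
      with (T a * (prodL l T - prodL l E) + (T a - E a) * prodL l E) by ring.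
    eapply Rle_trans; [apply Rabs_triang|]. rewrite !Rabs_mult.
    apply Rle_trans with ((A + B) * ((A + B) ^ length l - A ^ length l) + B * A ^ length l).
    + apply Rplus_le_compat; apply Rmult_le_compat; auto using Rabs_pos.
    + assert (0 <= A ^ length l) by (apply pow_le; auto). lra.
Qed.

Lemma Rabs_prodD_sub_le D T E A B :
  0 <= A -> (forall d, (d < D)%nat -> Rabs (E d) <= A /\ Rabs (T d - E d) <= B) ->
  Rabs (prodD D T - prodD D E) <= (A + B) ^ D - A ^ D.
Proof.
  intros HA H. pose proof (Rabs_prodL_sub_le (seq 0 D) T E A B HA) as HL.
  rewrite length_seq in HL. apply HL. intros d Hd. apply in_seq in Hd. apply H. lia.
Qed.

Lemma INR_fact_pos n : 0 < INR (fact n).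
Proof. apply lt_0_INR, lt_O_fact. Qed.

Lemma pow_div_fact_nonneg x n : 0 <= x -> 0 <= x ^ n / INR (fact n).
Proof.
  intro Hx. apply Rmult_le_pos; [apply pow_le; exact Hx|].
  apply Rlt_le, Rinv_0_lt_compat, INR_fact_pos.
Qed.

Lemma INR_fact_S n : INR (fact (S n)) = INR (S n) * INR (fact n).
Proof. apply mult_INR. Qed.

Lemma pow_m1_sq n : (-1) ^ n * (-1) ^ n = 1.
Proof. rewrite <- Rpow_mult_distr. replace (-1 * -1) with 1 by ring. apply pow1. Qed.

Lemma pow_le_base x n : 0 <= x <= 1 -> (1 <= n)%nat -> x ^ n <= x.
Proof.
  intros Hx Hn. destruct n as [|n]; [lia|]. simpl.
  assert (x ^ n <= 1) by (rewrite <- (pow1 n); apply pow_incr; lra).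
  assert (0 <= x ^ n) by (apply pow_le; lra). nra.
Qed.

Lemma exp_le_1 x : x <= 0 -> exp x <= 1.
Proof.
  intro Hx. rewrite <- exp_0. destruct (Rle_lt_or_eq_dec x 0 Hx) as [Hlt | ->]; [|lra].
  left; apply exp_increasing, Hlt.
Qed.

Lemma derivable_pt_lim_comp_opp f t l :
  derivable_pt_lim f (- t) l -> derivable_pt_lim (fun x => f (- x)) t (- l).
Proof.
  intro Hf. replace (- l) with (l * -1) by ring.
  apply (derivable_pt_lim_comp (fun x => - x) f); [|exact Hf].
  apply (derivable_pt_lim_opp (fun x => x)), derivable_pt_lim_id.
Qed.

Lemma derivable_pt_lim_pow_div_fact n t :
  derivable_pt_lim (fun x => x ^ S n / INR (fact (S n))) t (t ^ n / INR (fact n)).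
Proof.
  apply derivable_pt_lim_ext with (fun x => / INR (fact (S n)) * x ^ S n).
  { intro; unfold Rdiv; ring. }
  replace (t ^ n / INR (fact n)) with (/ INR (fact (S n)) * (INR (S n) * t ^ pred (S n))).
  { apply derivable_pt_lim_scal, derivable_pt_lim_pow. }
  rewrite INR_fact_S. simpl pred.
  assert (0 < INR (S n)) by (apply lt_0_INR; lia). pose proof (INR_fact_pos n).
  field. lra.
Qed.

Lemma le_of_deriv_nonneg F F' a b : a <= b ->
  (forall t, derivable_pt_lim F t (F' t)) -> (forall t, a <= t <= b -> 0 <= F' t) -> F a <= F b.
Proof.
  intros Hab HF HF'. destruct (Req_dec a b) as [<-|Hne]; [lra|].
  destruct (MVT_cor2 F F' a b ltac:(lra) (fun c _ => HF c)) as [c [E Hc]].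
  assert (0 <= F' c * (b - a)) by (apply Rmult_le_pos; [apply HF'|]; lra). lra.
Qed.

Lemma le_value_at_0 F F' y : (forall t, derivable_pt_lim F t (F' t)) ->
  (forall t, 0 <= t -> F' t <= 0) -> (forall t, t <= 0 -> 0 <= F' t) -> F y <= F 0.
Proof.
  intros HF Hpos Hneg. destruct (Rle_dec 0 y).
  - assert (- F 0 <= - F y); [|lra].
    apply (le_of_deriv_nonneg (fun t => - F t) (fun t => - F' t)); auto.
    + intro t. apply derivable_pt_lim_opp, HF.
    + intros t Ht. pose proof (Hpos t). lra.
  - apply (le_of_deriv_nonneg F F'); auto; [lra|]. intros t Ht. apply Hneg. lra.
Qed.

Lemma Rabs_le_of_deriv_bound F F' C p :
  (forall t, derivable_pt_lim F t (F' t)) -> F 0 = 0 ->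
  (forall t, Rabs (F' t) <= C * Rabs t ^ p / INR (fact p)) ->
  forall z, Rabs (F z) <= C * Rabs z ^ S p / INR (fact (S p)).
Proof.
  assert (Hpos : forall F F', (forall t, derivable_pt_lim F t (F' t)) -> F 0 = 0 ->
      (forall t, Rabs (F' t) <= C * Rabs t ^ p / INR (fact p)) ->
      forall z, 0 <= z -> Rabs (F z) <= C * z ^ S p / INR (fact (S p))).
  { intros G G' HG HG0 HG' z Hz.
    set (P t := C * (t ^ S p / INR (fact (S p)))).
    assert (HP : forall t, derivable_pt_lim P t (C * (t ^ p / INR (fact p)))).
    { intro t. apply derivable_pt_lim_scal, derivable_pt_lim_pow_div_fact. }
    assert (HG'le : forall t, 0 <= t ->
      - (C * (t ^ p / INR (fact p))) <= G' t <= C * (t ^ p / INR (fact p))).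
    { intros t Ht. pose proof (HG' t) as H. rewrite (Rabs_right t) in H by lra.
      pose proof (Rle_abs (G' t)). pose proof (Rle_abs (- G' t)). rewrite Rabs_Ropp in *.
      unfold Rdiv in *. lra. }
    assert (P 0 - G 0 <= P z - G z).
    { apply (le_of_deriv_nonneg (fun t => P t - G t)
                                (fun t => C * (t ^ p / INR (fact p)) - G' t)); auto.
      - intro t. apply derivable_pt_lim_minus; auto.
      - intros t Ht. pose proof (HG'le t (proj1 Ht)). lra. }
    assert (P 0 + G 0 <= P z + G z).
    { apply (le_of_deriv_nonneg (fun t => P t + G t)
                                (fun t => C * (t ^ p / INR (fact p)) + G' t)); auto.
      - intro t. apply derivable_pt_lim_plus; auto.
      - intros t Ht. pose proof (HG'le t (proj1 Ht)). lra. }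
    assert (P 0 = 0) by (unfold P; rewrite pow_i by lia; unfold Rdiv; ring).
    unfold P in *. apply Rabs_le. unfold Rdiv in *. lra. }
  intros HF HF0 HF' z. destruct (Rle_dec 0 z).
  - rewrite (Rabs_right z) by lra. apply (Hpos F F'); auto.
  - rewrite (Rabs_left z) by lra.
    replace (F z) with (F (- - z)) by (rewrite Ropp_involutive; reflexivity).
    apply (Hpos (fun t => F (- t)) (fun t => - F' (- t))); [| |intro t|lra].
    + intro t. apply derivable_pt_lim_comp_opp, HF.
    + rewrite Ropp_0. exact HF0.
    + rewrite Rabs_Ropp, <- (Rabs_Ropp t). apply HF'.
Qed.

Lemma fact_add_le j p : (fact (j + p) <= 2 ^ (j + p) * fact j * fact p)%nat.
Proof.
  assert (Hpow : forall m, (1 <= 2 ^ m)%nat) by (induction m; simpl; lia).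
  remember (j + p)%nat as n eqn:En. revert j p En.
  induction n as [n IH] using lt_wf_ind. intros j p En. subst n.
  destruct j as [|j]; [simpl; specialize (Hpow p); nia|].
  destruct p as [|p]; [rewrite Nat.add_0_r; simpl fact at 3; specialize (Hpow (S j)); nia|].
  (* Pascal's rule: (j+p+2)! = (j+1)(j+p+1)! + (p+1)(j+p+1)! *)
  assert (H1 := IH (j + S p)%nat ltac:(lia) j (S p) eq_refl).
  assert (H2 := IH (S j + p)%nat ltac:(lia) (S j) p eq_refl).
  replace (S j + S p)%nat with (S (j + S p)) by lia.
  replace (S j + p)%nat with (j + S p)%nat in H2 by lia.
  change (fact (S (j + S p))) with (S (j + S p) * fact (j + S p))%nat.
  change (2 ^ S (j + S p))%nat with (2 * 2 ^ (j + S p))%nat.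
  change (fact (S j)) with (S j * fact j)%nat in *.
  change (fact (S p)) with (S p * fact p)%nat in *.
  set (F := fact (j + S p)) in *. set (P := (2 ^ (j + S p))%nat) in *.
  nia.
Qed.

Lemma INR_fact_add_le j p :
  INR (fact (j + p)) <= 2 ^ (j + p) * INR (fact j) * INR (fact p).
Proof.
  pose proof (le_INR _ _ (fact_add_le j p)) as H. rewrite !mult_INR, pow_INR in H.
  replace (INR 2) with 2 in H by (simpl; ring). exact H.
Qed.

Definition hermite_bound n := sqrt (4 ^ n * INR (fact n)).

Lemma hermite_bound_sq n : hermite_bound n ^ 2 = 4 ^ n * INR (fact n).
Proof.
  apply pow2_sqrt, Rmult_le_pos; [apply pow_le; lra|apply pos_INR].
Qed.

Lemma pow_sq_comm x n : (x ^ n) ^ 2 = (x ^ 2) ^ n.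
Proof. rewrite <- !pow_mult, Nat.mul_comm. reflexivity. Qed.

Lemma le_of_sq_le a b : 0 <= b -> a ^ 2 <= b ^ 2 -> a <= b.
Proof. intros. nra. Qed.

(* Compare squares: n! <= 2^n j! p! absorbs the n! of [hermite_bound n], n = j + p. *)
Lemma taylor_term_le j p x y r : 0 <= x -> 0 <= y -> 0 <= r ->
  x ^ 2 <= r ^ 2 / 2 -> y ^ 2 <= r ^ 2 / 2 ->
  x ^ j / INR (fact j) * (hermite_bound (j + p) * y ^ p / INR (fact p))
  <= (2 * r) ^ (j + p) / sqrt (INR (fact p)).
Proof.
  intros Hx Hy Hr Hx2 Hy2. set (n := (j + p)%nat).
  pose proof (INR_fact_pos j) as Fj. pose proof (INR_fact_pos p) as Fp.
  assert (Sp : 0 < sqrt (INR (fact p))) by (apply sqrt_lt_R0; exact Fp).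
  apply le_of_sq_le; [apply Rle_mult_inv_pos; [apply pow_le; lra|exact Sp]|].
  assert (Hxy : (x ^ 2) ^ j * (y ^ 2) ^ p <= (r ^ 2 / 2) ^ n).
  { unfold n. rewrite pow_add.
    apply Rmult_le_compat; try apply pow_le, pow2_ge_0; apply pow_incr; auto using pow2_ge_0. }
  pose proof (INR_fact_add_le j p) as Hn. fold n in Hn.
  replace ((x ^ j / INR (fact j) * (hermite_bound n * y ^ p / INR (fact p))) ^ 2)
    with ((x ^ j) ^ 2 * (y ^ p) ^ 2 * hermite_bound n ^ 2 / (INR (fact j) ^ 2 * INR (fact p) ^ 2))
    by (field; lra).
  replace (((2 * r) ^ n / sqrt (INR (fact p))) ^ 2)
    with (((2 * r) ^ n) ^ 2 / sqrt (INR (fact p)) ^ 2)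
    by (field; lra).
  rewrite hermite_bound_sq, pow2_sqrt, !pow_sq_comm by lra.
  replace ((2 * r) ^ 2) with (4 * r ^ 2) by ring.
  apply Rle_trans with ((r ^ 2 / 2) ^ n * (4 ^ n * (2 ^ n * INR (fact j) * INR (fact p)))
                        / (INR (fact j) ^ 2 * INR (fact p) ^ 2)).
  { unfold Rdiv. apply Rmult_le_compat_r.
    { apply Rlt_le, Rinv_0_lt_compat, Rmult_lt_0_compat; apply pow_lt; assumption. }
    assert (H4 : 0 < 4 ^ n) by (apply pow_lt; lra).
    apply Rmult_le_compat; [apply Rmult_le_pos; apply pow_le, pow2_ge_0| |exact Hxy|].
    - apply Rmult_le_pos; [lra|apply pos_INR].
    - apply Rmult_le_compat_l; lra. }
  replace ((r ^ 2 / 2) ^ n * (4 ^ n * (2 ^ n * INR (fact j) * INR (fact p)))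
           / (INR (fact j) ^ 2 * INR (fact p) ^ 2))
    with ((4 * r ^ 2) ^ n / INR (fact p) / INR (fact j)).
  2:{ unfold Rdiv. rewrite !Rpow_mult_distr, pow_inv.
      assert (0 < 2 ^ n) by (apply pow_lt; lra).
      replace (4 ^ n) with (2 ^ n * 2 ^ n) by (rewrite <- Rpow_mult_distr; f_equal; ring).
      field; lra. }
  assert (1 <= INR (fact j)) by (apply (le_INR 1), lt_O_fact).
  assert (0 <= (4 * r ^ 2) ^ n / INR (fact p))
    by (apply Rle_mult_inv_pos; [apply pow_le; nra|exact Fp]).
  unfold Rdiv at 1. rewrite <- (Rmult_1_r ((4 * r ^ 2) ^ n / INR (fact p))) at 2.
  apply Rmult_le_compat_l; [assumption|]. rewrite <- Rinv_1. apply Rinv_le_contravar; lra.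
Qed.

Lemma geometric_sum_mul rho p : sumL (seq 0 p) (fun j => rho ^ j) * (1 - rho) = 1 - rho ^ p.
Proof.
  induction p as [|p IH]; [unfold sumL; simpl; ring|].
  rewrite sumL_seq_S, Rmult_plus_distr_r, IH. simpl. ring.
Qed.

Lemma geometric_sum_succ_le rho p : 0 <= rho < 1 ->
  (sumL (seq 0 p) (fun j => rho ^ j) + 1) * (1 - rho) ^ 2 <= 2 - rho ^ p.
Proof.
  intros Hr. pose proof (geometric_sum_mul rho p) as G.
  assert (rho ^ p <= 1) by (rewrite <- (pow1 p); apply pow_incr; lra).
  assert (0 <= rho ^ p) by (apply pow_le; lra).
  replace ((sumL (seq 0 p) (fun j => rho ^ j) + 1) * (1 - rho) ^ 2)
    with ((sumL (seq 0 p) (fun j => rho ^ j) * (1 - rho)) * (1 - rho) + (1 - rho) ^ 2) by ring.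
  rewrite G. nra.
Qed.

Lemma nth_deriv_unique n f g1 g2 :
  nth_deriv n f g1 -> nth_deriv n f g2 -> forall t, g1 t = g2 t.
Proof.
  intros H; revert g2; induction H as [|n f f' g Hf' Hn IH]; intros g2 H2;
    inversion H2 as [|n' f0 f'' g' Hf'' Hn']; subst; auto.
  assert (E : f' = f'').
  { apply functional_extensionality; intro t. eapply uniqueness_limite; eauto. }
  subst. apply IH; auto.
Qed.

Lemma nth_deriv_S_last n : forall f g, nth_deriv (S n) f g ->
  exists k, nth_deriv n f k /\ forall t, derivable_pt_lim k t (g t).
Proof.
  induction n as [|n IH]; intros f g H; inversion H as [|n' f0 f' g' Hf' Hn]; subst.
  - inversion Hn; subst. exists f. split; [constructor|auto].
  - destruct (IH _ _ Hn) as [k [Hk Hd]]. exists k; split; auto. econstructor; eauto.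
Qed.

Section Hermite.
Variable hf : nat -> R -> R.
Hypothesis Hhf : is_hermite_functions hf.

Lemma hermite_0 t : hf O t = exp (- t ^ 2).
Proof.
  pose proof (Hhf O) as H. inversion H as [f E|]. simpl in *.
  pose proof (f_equal (fun F => F t) H0) as E2. simpl in E2. lra.
Qed.

Lemma derivable_pt_lim_hermite n t : derivable_pt_lim (hf n) t (- hf (S n) t).
Proof.
  destruct (nth_deriv_S_last n _ _ (Hhf (S n))) as [k [Hk Hd]].
  pose proof (nth_deriv_unique _ _ _ _ Hk (Hhf n)) as E.
  apply derivable_pt_lim_ext with (fun t => (-1) ^ n * k t).
  { intro x. rewrite E, <- Rmult_assoc, pow_m1_sq. ring. }
  replace (- hf (S n) t) with ((-1) ^ n * ((-1) ^ S n * hf (S n) t)).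
  { apply derivable_pt_lim_scal, Hd. }
  simpl. rewrite <- Rmult_assoc.
  replace ((-1) ^ n * (-1 * (-1) ^ n)) with (- ((-1) ^ n * (-1) ^ n)) by ring.
  rewrite pow_m1_sq. ring.
Qed.

(* Differentiating the recurrence at level [n] gives it at level [n+1]. *)
Lemma hermite_recurrence n t : hf (S n) t = 2 * t * hf n t - 2 * INR n * hf (pred n) t.
Proof.
  revert t; induction n as [|n IH]; intro t.
  - assert (Hd : derivable_pt_lim (hf O) t (exp (- t ^ 2) * (- (INR 2 * t ^ 1)))).
    { apply derivable_pt_lim_ext with (fun x => exp (- x ^ 2)).
      { intro; rewrite hermite_0; auto. }
      apply (derivable_pt_lim_comp (fun x => - x ^ 2)).
      - apply (derivable_pt_lim_opp (fun x => x ^ 2)), derivable_pt_lim_pow.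
      - apply derivable_pt_lim_exp. }
    pose proof (uniqueness_limite _ _ _ _ (derivable_pt_lim_hermite O t) Hd).
    rewrite hermite_0. simpl in *. lra.
  - assert (Hd : derivable_pt_lim (hf (S n)) t
       (2 * hf n t + 2 * t * (- hf (S n) t) - 2 * INR n * (- hf (S (pred n)) t))).
    { apply derivable_pt_lim_ext with (fun x => 2 * x * hf n x - 2 * INR n * hf (pred n) x).
      { intro; rewrite IH; auto. }
      apply derivable_pt_lim_minus; [|apply derivable_pt_lim_scal, derivable_pt_lim_hermite].
      replace (2 * hf n t) with (2 * 1 * hf n t) by ring.
      apply (derivable_pt_lim_mult (fun x => 2 * x)); [|apply derivable_pt_lim_hermite].
      apply derivable_pt_lim_scal, derivable_pt_lim_id. }
    pose proof (uniqueness_limite _ _ _ _ (derivable_pt_lim_hermite (S n) t) Hd).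
    destruct n as [|n]; simpl pred in *; rewrite ?S_INR in *; simpl INR in *; lra.
Qed.

Lemma hermite_at_0_sq_le n : hf n 0 ^ 2 <= 2 ^ n * INR (fact n).
Proof.
  enough (H : hf n 0 ^ 2 <= 2 ^ n * INR (fact n) /\
              hf (S n) 0 ^ 2 <= 2 ^ S n * INR (fact (S n))) by apply H.
  induction n as [|n [IH1 IH2]].
  - rewrite hermite_recurrence, !hermite_0. simpl. rewrite Rmult_0_l, Ropp_0, exp_0. lra.
  - split; [exact IH2|].
    rewrite hermite_recurrence, !INR_fact_S. simpl pred.
    replace ((2 * 0 * hf (S n) 0 - 2 * INR (S n) * hf n 0) ^ 2)
      with (4 * INR (S n) ^ 2 * hf n 0 ^ 2) by ring.
    rewrite !S_INR in *. pose proof (pos_INR n). pose proof (INR_fact_pos n).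
    assert (0 < 2 ^ n) by (apply pow_lt; lra).
    apply Rle_trans with (4 * (INR n + 1) ^ 2 * (2 ^ n * INR (fact n))).
    + apply Rmult_le_compat_l; [nra|exact IH1].
    + simpl. nra.
Qed.

(* [V = h_n^2 + 2 n h_(n-1)^2] has derivative [-4 t h_n^2], so it is maximal at [0]. *)
Lemma hermite_sq_le n y : hf n y ^ 2 <= 4 ^ n * INR (fact n).
Proof.
  set (V t := hf n t ^ 2 + 2 * INR n * hf (pred n) t ^ 2).
  assert (HV : forall t, derivable_pt_lim V t (- 4 * t * hf n t ^ 2)).
  { intro t. unfold V.
    replace (- 4 * t * hf n t ^ 2) with
      (INR 2 * hf n t ^ 1 * (- hf (S n) t)
       + 2 * INR n * (INR 2 * hf (pred n) t ^ 1 * (- hf (S (pred n)) t))).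
    - apply derivable_pt_lim_plus; [|apply derivable_pt_lim_scal];
        apply (derivable_pt_lim_comp _ (fun x => x ^ 2));
        auto using derivable_pt_lim_hermite, derivable_pt_lim_pow.
    - rewrite (hermite_recurrence n t). destruct n; simpl; ring. }
  assert (HV0 : V 0 <= 4 ^ n * INR (fact n)).
  { unfold V. destruct n as [|n].
    - rewrite hermite_0. simpl. rewrite Rmult_0_l, Ropp_0, exp_0. lra.
    - simpl pred. pose proof (hermite_at_0_sq_le (S n)). pose proof (hermite_at_0_sq_le n).
      rewrite INR_fact_S in *. pose proof (pos_INR (S n)). pose proof (INR_fact_pos n).
      assert (2 ^ n <= 4 ^ n) by (apply pow_incr; lra).
      set (X := INR (S n) * INR (fact n)) in *.
      assert (0 <= X) by (unfold X; nra).
      assert (2 * INR (S n) * hf n 0 ^ 2 <= 2 * 2 ^ n * X)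
        by (unfold X; replace (2 * 2 ^ n * _) with (2 * INR (S n) * (2 ^ n * INR (fact n))) by ring;
            apply Rmult_le_compat_l; lra).
      simpl pow in *. nra. }
  assert (V y <= V 0).
  { apply (le_value_at_0 V _ y HV); intros t Ht; pose proof (pow2_ge_0 (hf n t)); nra. }
  pose proof (pos_INR n). pose proof (pow2_ge_0 (hf (pred n) y)).
  unfold V in *. nra.
Qed.

Lemma Rabs_hermite_le n y : Rabs (hf n y) <= hermite_bound n.
Proof.
  rewrite <- (sqrt_pow2 (Rabs (hf n y))) by apply Rabs_pos. apply sqrt_le_1_alt.
  rewrite pow2_abs. apply hermite_sq_le.
Qed.

Definition gauss_deriv k y := (-1) ^ k * hf k y.

Lemma derivable_pt_lim_gauss_deriv k y :
  derivable_pt_lim (gauss_deriv k) y (gauss_deriv (S k) y).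
Proof.
  unfold gauss_deriv.
  replace ((-1) ^ S k * hf (S k) y) with ((-1) ^ k * (- hf (S k) y)) by (simpl; ring).
  apply derivable_pt_lim_scal, derivable_pt_lim_hermite.
Qed.

Lemma Rabs_gauss_deriv_le k y : Rabs (gauss_deriv k y) <= hermite_bound k.
Proof. unfold gauss_deriv. rewrite Rabs_mult, pow_1_abs, Rmult_1_l. apply Rabs_hermite_le. Qed.

Definition gauss_taylor k p y z :=
  sumL (seq 0 p) (fun j => z ^ j / INR (fact j) * gauss_deriv (k + j) y).

Lemma gauss_taylor_S k p y z :
  gauss_taylor k (S p) y z
  = gauss_taylor k p y z + z ^ p / INR (fact p) * gauss_deriv (k + p) y.
Proof. apply sumL_seq_S. Qed.

Lemma gauss_taylor_at_0 k p y : gauss_taylor k (S p) y 0 = gauss_deriv k y.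
Proof.
  induction p as [|p IH].
  - unfold gauss_taylor, sumL. simpl. rewrite Nat.add_0_r. field.
  - rewrite gauss_taylor_S, IH. simpl. unfold Rdiv. ring.
Qed.

Lemma derivable_pt_lim_gauss_taylor k p y z :
  derivable_pt_lim (gauss_taylor k (S p) y) z (gauss_taylor (S k) p y z).
Proof.
  revert k; induction p as [|p IH]; intro k.
  - apply derivable_pt_lim_ext with (fun _ => gauss_deriv k y).
    { intro; unfold gauss_taylor, sumL; simpl; rewrite Nat.add_0_r; field. }
    apply derivable_pt_lim_const.
  - apply derivable_pt_lim_ext
      with (fun t => gauss_taylor k (S p) y t
                     + gauss_deriv (k + S p) y * (t ^ S p / INR (fact (S p)))).
    { intro; rewrite (gauss_taylor_S k (S p)); ring. }
    rewrite gauss_taylor_S. replace (S k + p)%nat with (k + S p)%nat by lia.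
    rewrite (Rmult_comm _ (gauss_deriv _ _)).
    apply derivable_pt_lim_plus; [apply IH|].
    apply derivable_pt_lim_scal, derivable_pt_lim_pow_div_fact.
Qed.

Lemma gauss_taylor_remainder_le p : forall k y z,
  Rabs (gauss_deriv k (y + z) - gauss_taylor k p y z)
  <= hermite_bound (k + p) * Rabs z ^ p / INR (fact p).
Proof.
  induction p as [|p IH]; intros k y z.
  - unfold gauss_taylor, sumL. simpl. rewrite Rminus_0_r, Nat.add_0_r, Rdiv_1_r, Rmult_1_r.
    apply Rabs_gauss_deriv_le.
  - replace (k + S p)%nat with (S k + p)%nat by lia.
    apply (Rabs_le_of_deriv_bound (fun t => gauss_deriv k (y + t) - gauss_taylor k (S p) y t)
             (fun t => gauss_deriv (S k) (y + t) - gauss_taylor (S k) p y t)).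
    + intro t. apply derivable_pt_lim_minus; [|apply derivable_pt_lim_gauss_taylor].
      rewrite <- Rmult_1_r. apply (derivable_pt_lim_comp (fun x => y + x) (gauss_deriv k)).
      * rewrite <- (Rplus_0_l 1). apply (derivable_pt_lim_plus (fun _ => y) (fun x => x)).
        -- apply derivable_pt_lim_const.
        -- apply derivable_pt_lim_id.
      * apply derivable_pt_lim_gauss_deriv.
    + rewrite gauss_taylor_at_0, Rplus_0_r. ring.
    + intro t. apply IH.
Qed.

Definition coord_series p u c t :=
  sumL (seq 0 p) (fun j => sumL (seq 0 p) (fun i =>
    (-1) ^ j / INR (fact j) * (u ^ i / INR (fact i)) * hf (i + j) c * t ^ j)).

Lemma coord_series_gauss_taylor p u c t :
  coord_series p u c t
  = sumL (seq 0 p) (fun j => t ^ j / INR (fact j) * gauss_taylor j p c (- u)).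
Proof.
  apply sumL_ext; intro j. unfold gauss_taylor, gauss_deriv. rewrite sumL_scal_l.
  apply sumL_ext; intro i.
  replace ((- u) ^ i) with ((-1) ^ i * u ^ i) by (rewrite <- Rpow_mult_distr; f_equal; ring).
  rewrite (Nat.add_comm i j), pow_add.
  replace ((-1) ^ j) with ((-1) ^ j * ((-1) ^ i * (-1) ^ i)) at 1 by (rewrite pow_m1_sq; ring).
  unfold Rdiv. ring.
Qed.

(* The error splits into the errors of the inner expansions (around [y], in [w]),
   weighted by [t ^ j / j!], plus the error of the outer expansion (around [y + w], in [t]). *)
Lemma gauss_taylor_composed_remainder_le p y w t :
  Rabs (sumL (seq 0 p) (fun j => t ^ j / INR (fact j) * gauss_taylor j p y w)
        - gauss_deriv O (y + w + t))
  <= sumL (seq 0 p) (fun j => Rabs t ^ j / INR (fact j)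
                              * (hermite_bound (j + p) * Rabs w ^ p / INR (fact p)))
     + hermite_bound p * Rabs t ^ p / INR (fact p).
Proof.
  replace (sumL (seq 0 p) (fun j => t ^ j / INR (fact j) * gauss_taylor j p y w)
           - gauss_deriv O (y + w + t))
    with (sumL (seq 0 p) (fun j => t ^ j / INR (fact j)
                                   * (gauss_taylor j p y w - gauss_deriv j (y + w)))
          + (gauss_taylor O p (y + w) t - gauss_deriv O (y + w + t))).
  2:{ change (gauss_taylor O p (y + w) t)
        with (sumL (seq 0 p) (fun j => t ^ j / INR (fact j) * gauss_deriv j (y + w))).
      rewrite (sumL_ext _ _ (fun j => t ^ j / INR (fact j) * gauss_taylor j p y w
                                     - t ^ j / INR (fact j) * gauss_deriv j (y + w)))
        by (intro; ring).
      rewrite sumL_minus. ring. }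
  eapply Rle_trans; [apply Rabs_triang|]. apply Rplus_le_compat.
  - eapply Rle_trans; [apply Rabs_sumL_le|]. apply sumL_le; intros j _.
    unfold Rdiv at 1 2.
    rewrite !Rabs_mult, Rabs_inv, <- RPow_abs, (Rabs_right (INR (fact j))), Rabs_minus_sym
      by (pose proof (INR_fact_pos j); lra).
    apply Rmult_le_compat_l; [|apply gauss_taylor_remainder_le].
    apply pow_div_fact_nonneg, Rabs_pos.
  - rewrite Rabs_minus_sym. apply gauss_taylor_remainder_le.
Qed.

Lemma coord_series_error p r0 u t c : 0 <= r0 < 1 / 2 ->
  u ^ 2 <= r0 ^ 2 / 2 -> t ^ 2 <= r0 ^ 2 / 2 ->
  Rabs (coord_series p u c t - exp (- (c - u + t) ^ 2))
  <= (2 * r0) ^ p * (2 - (2 * r0) ^ p) / sqrt (INR (fact p)) / (1 - 2 * r0) ^ 2.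
Proof.
  intros Hr Hu Ht. set (rho := 2 * r0). set (s := sqrt (INR (fact p))).
  assert (Hs : 0 < s) by (apply sqrt_lt_R0, INR_fact_pos).
  assert (Habs : forall x, x ^ 2 <= r0 ^ 2 / 2 -> Rabs x ^ 2 <= r0 ^ 2 / 2)
    by (intros; rewrite pow2_abs; assumption).
  rewrite coord_series_gauss_taylor.
  replace (exp (- (c - u + t) ^ 2)) with (gauss_deriv O (c + - u + t))
    by (unfold gauss_deriv; rewrite hermite_0, pow_O, Rmult_1_l; do 3 f_equal; ring).
  eapply Rle_trans; [apply gauss_taylor_composed_remainder_le|].
  apply Rle_trans with (rho ^ p / s * (sumL (seq 0 p) (fun j => rho ^ j) + 1)).
  - rewrite Rmult_plus_distr_l, Rmult_1_r, sumL_scal_l. apply Rplus_le_compat.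
    + apply sumL_le; intros j _. replace (rho ^ p / s * rho ^ j) with (rho ^ (j + p) / s)
        by (rewrite pow_add; unfold Rdiv; ring).
      apply taylor_term_le; auto using Rabs_pos; try lra. rewrite Rabs_Ropp. auto.
    + pose proof (taylor_term_le O p 0 (Rabs t) r0) as H.
      rewrite pow_O, Nat.add_0_l, Rdiv_1_r, Rmult_1_l in H.
      apply H; auto using Rabs_pos; try lra. rewrite pow_i by lia. nra.
  - assert (0 <= rho < 1) by (unfold rho; lra).
    assert (0 <= rho ^ p / s) by (apply Rle_mult_inv_pos; [apply pow_le|]; lra).
    assert (0 < (1 - rho) ^ 2) by (apply pow_lt; lra).
    apply Rmult_le_reg_r with ((1 - rho) ^ 2); [assumption|].
    replace (rho ^ p * (2 - rho ^ p) / s / (1 - rho) ^ 2 * (1 - rho) ^ 2)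
      with (rho ^ p / s * (2 - rho ^ p)) by (field; lra).
    rewrite Rmult_assoc. apply Rmult_le_compat_l; [assumption|].
    apply geometric_sum_succ_le. assumption.
Qed.
End Hermite.

Lemma sumL_mindices_prodD p D : forall phi : nat -> nat -> R,
  sumL (mindices D p) (fun a => prodD D (fun d => phi d (nth d a 0%nat))) =
  prodD D (fun d => sumL (seq 0 p) (phi d)).
Proof.
  induction D as [|D IH]; intro phi; [unfold sumL, prodD; simpl; ring|].
  simpl mindices.
  rewrite sumL_flat_map, prodD_S, <- (IH (fun d => phi (S d))), sumL_scal_l.
  apply sumL_ext; intro a. rewrite sumL_map, sumL_scal_r.
  apply sumL_ext; intro i. rewrite prodD_S. simpl nth. ring.
Qed.

Lemma nth_map_seq {A} (f : nat -> A) D d x0 :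
  (d < D)%nat -> nth d (map f (seq 0 D)) x0 = f d.
Proof.
  intro Hd. rewrite (nth_indep _ x0 (f 0%nat)) by (rewrite length_map, length_seq; exact Hd).
  rewrite map_nth, seq_nth by exact Hd. reflexivity.
Qed.

Lemma nth_vscale D x c s d :
  (d < D)%nat -> nth d (vscale D x c s) 0 = (nth d x 0 - nth d c 0) / s.
Proof. intro Hd. unfold vscale. rewrite nth_map_seq by exact Hd. reflexivity. Qed.

Lemma nth_madd D a b d :
  (d < D)%nat -> nth d (madd D a b) 0%nat = (nth d a 0 + nth d b 0)%nat.
Proof. intro Hd. unfold madd. rewrite nth_map_seq by exact Hd. reflexivity. Qed.

Lemma prodD_prodL D f : prodD D f = prodL (seq 0 D) f.
Proof. reflexivity. Qed.

Lemma Gtilde_term_prodD hf D (u c t : list R) a b :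
  (-1) ^ mabs D b * / mfact D b * (/ mfact D a * mpow D u a)
  * hmulti hf D (madd D a b) c * mpow D t b =
  prodD D (fun d => (-1) ^ nth d b 0%nat / INR (fact (nth d b 0%nat))
                    * (nth d u 0 ^ nth d a 0%nat / INR (fact (nth d a 0%nat)))
                    * hf (nth d a 0%nat + nth d b 0%nat)%nat (nth d c 0)
                    * nth d t 0 ^ nth d b 0%nat).
Proof.
  unfold mabs, mfact, mpow, hmulti.
  rewrite !prodD_prodL, pow_sum_prodL, !prodL_inv, !prodL_mult. apply prodL_ext_in.
  intros d Hd. apply in_seq in Hd. rewrite nth_madd by lia. unfold Rdiv. ring.
Qed.

Lemma sumL_factor_interchange {A B} (I : list A) (Rs : list B) (f : A -> R)
  (X : B -> A -> R) (Y : A -> A -> R) (g : A -> R) :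
  sumL I (fun b => f b * sumL I (fun a => sumL Rs (fun r => X r a) * Y a b) * g b) =
  sumL Rs (fun r => sumL I (fun b => sumL I (fun a => f b * X r a * Y a b * g b))).
Proof.
  rewrite <- sumL_comm. apply sumL_ext; intro b.
  rewrite sumL_scal_l, sumL_scal_r, <- sumL_comm. apply sumL_ext; intro a.
  rewrite sumL_scal_r, sumL_scal_l, sumL_scal_r. apply sumL_ext; intro r. ring.
Qed.

Lemma Gtilde_factor hf D p h Rs cQ cR q :
  let s := sqrt (2 * h ^ 2) in
  Gtilde hf D p h Rs cQ cR q =
  sumL Rs (fun r => prodD D (fun d => coord_series hf p
    (nth d (vscale D r cR s) 0) (nth d (vscale D cQ cR s) 0) (nth d (vscale D q cQ s) 0))).
Proof.
  intro s. unfold Gtilde, locL, farM. fold s. unfold Rdiv at 1.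
  rewrite sumL_factor_interchange. apply sumL_ext; intro r. unfold coord_series.
  rewrite <- (sumL_mindices_prodD p D (fun d j => sumL (seq 0 p) (fun i =>
    (-1) ^ j / INR (fact j) * (nth d (vscale D r cR s) 0 ^ i / INR (fact i))
    * hf (i + j)%nat (nth d (vscale D cQ cR s) 0) * nth d (vscale D q cQ s) 0 ^ j))).
  apply sumL_ext; intro b.
  rewrite <- (sumL_mindices_prodD p D (fun d i =>
    (-1) ^ nth d b 0%nat / INR (fact (nth d b 0%nat))
    * (nth d (vscale D r cR s) 0 ^ i / INR (fact i))
    * hf (i + nth d b 0)%nat (nth d (vscale D cQ cR s) 0)
    * nth d (vscale D q cQ s) 0 ^ nth d b 0%nat)).
  apply sumL_ext; intro a. apply Gtilde_term_prodD.
Qed.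

Lemma Gauss_factor D h Rs q cQ cR : 0 < h ->
  let s := sqrt (2 * h ^ 2) in
  Gauss D h Rs q =
  sumL Rs (fun r => prodD D (fun d => exp (- (nth d (vscale D cQ cR s) 0
    - nth d (vscale D r cR s) 0 + nth d (vscale D q cQ s) 0) ^ 2))).
Proof.
  intros Hh s. assert (Hs : s * s = 2 * h ^ 2) by (apply sqrt_sqrt; nra).
  assert (0 < s) by (apply sqrt_lt_R0; nra).
  unfold Gauss. apply sumL_ext; intro r. unfold dist2, sumD.
  replace (- sumL (seq 0 D) (fun d => (nth d q 0 - nth d r 0) ^ 2) / (2 * h ^ 2))
    with (- / (2 * h ^ 2) * sumL (seq 0 D) (fun d => (nth d q 0 - nth d r 0) ^ 2))
    by (unfold Rdiv; ring).
  rewrite sumL_scal_l, exp_sumL, prodD_prodL. apply prodL_ext_in; intros d Hd.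
  apply in_seq in Hd.
  rewrite !nth_vscale by lia. f_equal. rewrite <- Hs. field. lra.
Qed.

Lemma scaled_sq_le x r0 h :
  0 < h -> Rabs x < r0 * h -> (x / sqrt (2 * h ^ 2)) ^ 2 <= r0 ^ 2 / 2.
Proof.
  intros Hh Hx. assert (Hx2 : x ^ 2 <= (r0 * h) ^ 2).
  { rewrite <- pow2_abs. apply pow_incr. split; [apply Rabs_pos|lra]. }
  replace ((x / sqrt (2 * h ^ 2)) ^ 2) with (x ^ 2 / (2 * h ^ 2))
    by (unfold Rdiv; rewrite Rpow_mult_distr, pow_inv, pow2_sqrt by nra; reflexivity).
  apply Rmult_le_reg_r with (2 * h ^ 2); [nra|]. unfold Rdiv. rewrite Rmult_assoc, Rinv_l by nra.
  replace (r0 ^ 2 * / 2 * (2 * h ^ 2)) with ((r0 * h) ^ 2) by (field; lra). lra.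
Qed.

Lemma C_n_n n : C n n = 1.
Proof.
  unfold C. rewrite Nat.sub_diag. simpl fact. pose proof (INR_fact_pos n). simpl INR.
  field. lra.
Qed.

Lemma sumL_binomial_div a b e D : e <> 0 ->
  sumL (seq 0 D) (fun k => C D k * a ^ k * b ^ (D - k)) / e ^ D
  = (a / e + b / e) ^ D - (a / e) ^ D.
Proof.
  intro He. replace (a / e + b / e) with ((a + b) / e) by (field; exact He).
  unfold Rdiv. rewrite !Rpow_mult_distr, pow_inv, binomial, <- sumL_seq_sum_f_R0, sumL_seq_S.
  rewrite Nat.sub_diag, C_n_n. ring.
Qed.

Theorem mainTheorem2
  (hf : nat -> R -> R) (Hhf : is_hermite_functions hf)
  (D p : nat) (HD : (1 <= D)%nat) (Hp : (1 <= p)%nat)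
  (h : R) (Hh : 0 < h)
  (Qs Rs : list (list R)) (HQnd : NoDup Qs) (HRnd : NoDup Rs)
  (HQlen : forall q, In q Qs -> length q = D)
  (HRlen : forall r, In r Rs -> length r = D)
  (cQ cR : list R) (HcQ : length cQ = D) (HcR : length cR = D)
  (r0 : R) (Hr0 : 0 <= r0 < 1 / 2)
  (HQ : forall q, In q Qs -> forall d, (d < D)%nat -> Rabs (nth d q 0 - nth d cQ 0) < r0 * h)
  (HR : forall r, In r Rs -> forall d, (d < D)%nat -> Rabs (nth d r 0 - nth d cR 0) < r0 * h) :
  forall q, In q Qs ->
    Rabs (Gtilde hf D p h Rs cQ cR q - Gauss D h Rs q) <=
    INR (length Rs) / (1 - 2 * r0) ^ (2 * D) *
    sumL (seq 0 D) (fun k =>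
      C D k * ((1 - (2 * r0) ^ p) ^ 2) ^ k *
      ((2 * r0) ^ p * (2 - (2 * r0) ^ p) / sqrt (INR (fact p))) ^ (D - k)).
Proof.
  intros q Hq.
  set (e := (1 - 2 * r0) ^ 2).
  set (A := (1 - (2 * r0) ^ p) ^ 2 / e).
  set (B := (2 * r0) ^ p * (2 - (2 * r0) ^ p) / sqrt (INR (fact p)) / e).
  assert (He : 0 < e) by (apply pow_lt; lra).
  assert (HA : 1 <= A).
  { assert ((2 * r0) ^ p <= 2 * r0) by (apply pow_le_base; [lra|exact Hp]).
    unfold A. apply Rmult_le_reg_r with e; [exact He|].
    unfold Rdiv. rewrite Rmult_assoc, Rinv_l by lra.
    unfold e. rewrite Rmult_1_l, Rmult_1_r. apply pow_incr. lra. }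
  replace (INR (length Rs) / (1 - 2 * r0) ^ (2 * D) * _)
    with (INR (length Rs) * ((A + B) ^ D - A ^ D))
    by (unfold A, B; rewrite <- sumL_binomial_div, pow_mult by lra; fold e;
        field; apply pow_nonzero; lra).
  rewrite Gtilde_factor, (Gauss_factor D h Rs q cQ cR Hh), <- sumL_minus.
  eapply Rle_trans; [apply Rabs_sumL_le|]. rewrite <- sumL_const. apply sumL_le; intros r Hr.
  apply Rabs_prodD_sub_le; [lra|]. intros d Hd. split.
  - rewrite Rabs_right by (left; apply exp_pos). eapply Rle_trans; [|exact HA].
    apply exp_le_1. rewrite <- Ropp_0. apply Ropp_le_contravar, pow2_ge_0.
  - apply coord_series_error; [exact Hhf|exact Hr0| |];
      rewrite nth_vscale by exact Hd; apply scaled_sq_le; auto.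
Qed.
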